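(* Let $f$, strategies $\sigma_k$ and half-lines $w^{(k)}$ be produced by Algorithm 1 (as described in the context). Then for every iteration $k$ for which $\sigma_{k+1}$ is defined, $\chi(f^{(\sigma_{k+1})})\le\chi(f^{(\sigma_k)})$.
   Context: Setting: $f:\mathbb{R}^n\to\mathbb{R}^n$ with $f_i(x)=\min_{a\in A_i}f^a_i(x)$, where each $A_i$ is finite and each $f^a_i:\mathbb{R}^n\to\mathbb{R}$ is polyhedral (piecewise affine on finitely many polyhedra covering $\mathbb{R}^n$), order-preserving ($x\le y\Rightarrow f^a_i(x)\le f^a_i(y)$), additively homogeneous ($f^a_i(\lambda+x)=\lambda+f^a_i(x)$) and convex. A strategy is a map $\sigma$ with $\sigma(i)\in A_i$ for each $i\in[n]$; $f^{(\sigma)}$ is the map with coordinates $f^{(\sigma)}_i=f^{\sigma(i)}_i$. For a polyhedral order-preserving additively homogeneous $g$, the cycle time $\chi(g)=\lim_k g^k(x)/k$ exists. A half-line is $w:t\mapsto t\eta+v$ considered for $t$ large (germ at infinity); it is invariant under $g$ if $g(w(t))=w(t+1)$ for all $t$ large, super-invariant if $g(w(t))\le w(t+1)$ for all $t$ large; every such $g$ has an invariant half-line, whose slope equals $\chi(g)$. Half-lines are compared coordinatewise for $t$ large. For polyhedral convex order-preserving additively homogeneous $g$ with $\eta=\chi(g)$: $\hat g(\eta)=\lim_t g(t\eta)/t$, $\hat g^{\eta}(v)=\lim_t(g(t\eta+v)-t\hat g(\eta))$, $\bar g=\hat g^{\eta}-\eta$; for a super-invariant half-line $w:t\mapsto t\eta+v$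 of $g$ with $\eta=\chi(g)$, $Q_g(w)$ denotes the half-line $t\mapsto t\eta+\lim_k\bar g^k(v)$, which is the unique invariant half-line of $g$ agreeing with $w$ on the critical nodes of $g$. Algorithm 1: (1) $k=0$; choose a strategy $\sigma_0$ and an invariant half-line $w^{(0)}:t\mapsto t\eta^{(0)}+v^{(0)}$ of $f^{(\sigma_0)}$. (2) If $f(w^{(k)}(t))=w^{(k)}(t+1)$ for $t$ large, stop, returning $w^{(k)}$ and $\sigma_k$. (3) Otherwise choose $\sigma_{k+1}$ with $f(w^{(k)}(t))=f^{(\sigma_{k+1})}(w^{(k)}(t))$ for $t$ large, conservatively: for each $i$, $\sigma_{k+1}(i)=\sigma_k(i)$ whenever $f_i(w^{(k)}(t))=f^{(\sigma_k)}_i(w^{(k)}(t))$ for $t$ large. (4) Compute any invariant half-line $t\mapsto t\eta^{(k+1)}+v'$ of $f^{(\sigma_{k+1})}$; if $\eta^{(k+1)}\neq\eta^{(k)}$ set $w^{(k+1)}:t\mapsto t\eta^{(k+1)}+v'$ and go to (6). (5) Otherwise (degenerate iteration) set $w^{(k+1)}=Q_{f^{(\sigma_{k+1})}}(w^{(k)})$. (6) Increase $k$ by one and go to (2). *)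

From mathcomp Require Import all_boot all_order all_algebra.
From mathcomp Require Import all_classical all_reals all_analysis.
Import Order.TTheory GRing.Theory Num.Theory.
Import numFieldNormedType.Exports.

Set Implicit Arguments.
Unset Strict Implicit.
Unset Printing Implicit Defensive.

Local Open Scope ring_scope.
Local Open Scope classical_set_scope.

Definition vec (R : realType) (n : nat) := 'I_n -> R.

Definition vle (R : realType) (n : nat) (x y : vec R n) : Prop :=
  forall i, x i <= y i.

Definition vshift (R : realType) (n : nat) (l : R) (x : vec R n) : vec R n :=
  fun i => l + x i.

Definition polyhedron (R : realType) (n : nat) (P : set (vec R n)) : Prop :=
  exists (q : nat) (a : 'I_q -> vec R n) (b : 'I_q -> R),
    P = [set x | forall j, \sum_(i < n) a j i * x i <= b j].

Definition polyhedral (R : realType) (n : nat) (h : vec R n -> R) : Prop :=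
  exists (p : nat) (P : 'I_p -> set (vec R n)) (c : 'I_p -> vec R n) (d : 'I_p -> R),
    [/\ forall j, polyhedron (P j),
        forall x, exists j, P j x
      & forall j x, P j x -> h x = \sum_(i < n) c j i * x i + d j].

Definition order_preserving (R : realType) (n : nat) (h : vec R n -> R) : Prop :=
  forall x y, vle x y -> h x <= h y.

Definition add_homogeneous (R : realType) (n : nat) (h : vec R n -> R) : Prop :=
  forall (l : R) x, h (vshift l x) = l + h x.

Definition convex_fun (R : realType) (n : nat) (h : vec R n -> R) : Prop :=
  forall x y (th : R), 0 <= th -> th <= 1 ->
    h (fun i => th * x i + (1 - th) * y i) <= th * h x + (1 - th) * h y.

(* Game data: A_i = 'I_(m i).+1 (finite, nonempty), maps fa i a = f^a_i. *)
Definition strategy (n : nat) (m : 'I_n -> nat) := forall i : 'I_n, 'I_(m i).+1.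

Definition fmin (R : realType) (n : nat) (m : 'I_n -> nat)
  (fa : forall i : 'I_n, 'I_(m i).+1 -> vec R n -> R) : vec R n -> vec R n :=
  fun x i => \big[Num.min/fa i ord0 x]_(a < (m i).+1) fa i a x.

Definition fsig (R : realType) (n : nat) (m : 'I_n -> nat)
  (fa : forall i : 'I_n, 'I_(m i).+1 -> vec R n -> R) (sig : strategy m)
  : vec R n -> vec R n :=
  fun x i => fa i (sig i) x.

(* cycle time chi(g) = lim_k g^k(x)/k (taken at x = 0; independent of x) *)
Definition chi (R : realType) (n : nat) (g : vec R n -> vec R n) : vec R n :=
  fun i => lim ((fun k : nat => (iter k g (fun _ => 0) i / k%:R : R)) @ \oo).

Definition hl (R : realType) (n : nat) (eta v : vec R n) (t : R) : vec R n :=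
  fun i => t * eta i + v i.

Definition eventually_R (R : realType) (P : R -> Prop) : Prop :=
  exists T : R, forall t, T <= t -> P t.

Definition invariant_hl (R : realType) (n : nat) (g : vec R n -> vec R n)
  (eta v : vec R n) : Prop :=
  eventually_R (fun t => g (hl eta v t) = hl eta v (t + 1)).

Definition ghat (R : realType) (n : nat) (g : vec R n -> vec R n) (eta : vec R n)
  : vec R n :=
  fun i => lim ((g (fun j => t * eta j) i / t : R) @[t --> +oo]).

Definition ghat_eta (R : realType) (n : nat) (g : vec R n -> vec R n)
  (eta v : vec R n) : vec R n :=
  fun i => lim ((g (hl eta v t) i - t * ghat g eta i : R) @[t --> +oo]).

Definition gbar (R : realType) (n : nat) (g : vec R n -> vec R n)
  (eta : vec R n) : vec R n -> vec R n :=
  fun v i => ghat_eta g eta v i - eta i.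

(* offset of Q_g(w) for w : t |-> t eta + v, namely lim_k \bar g^k(v) *)
Definition Q_offset (R : realType) (n : nat) (g : vec R n -> vec R n)
  (eta v : vec R n) : vec R n :=
  fun i => lim ((fun k : nat => (iter k (gbar g eta) v i : R)) @ \oo).

(* A run of Algorithm 1: strategies sig k and half-lines w^(k) : t |-> t eta k + v k.
   Iteration k (steps 3-5) is executed iff the stopping test of step 2 failed for
   w^(0), ..., w^(k). *)
Definition alg1_run (R : realType) (n : nat) (m : 'I_n -> nat)
  (fa : forall i : 'I_n, 'I_(m i).+1 -> vec R n -> R)
  (sig : nat -> strategy m) (eta v : nat -> vec R n) : Prop :=
  invariant_hl (fsig fa (sig 0%N)) (eta 0%N) (v 0%N) /\
  forall k : nat,
    (forall j : nat, (j <= k)%N -> ~ invariant_hl (fmin fa) (eta j) (v j)) ->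
    [/\ (* step 3: sig (k+1) attains the minimum along w^(k) *)
        eventually_R (fun t => fmin fa (hl (eta k) (v k) t)
                               = fsig fa (sig k.+1) (hl (eta k) (v k) t)),
        (* step 3: conservative choice *)
        (forall i, eventually_R (fun t => fmin fa (hl (eta k) (v k) t) i
                                          = fsig fa (sig k) (hl (eta k) (v k) t) i) ->
                   sig k.+1 i = sig k i),
        (exists v' : vec R n, invariant_hl (fsig fa (sig k.+1)) (eta k.+1) v' /\
                              (eta k.+1 <> eta k -> v k.+1 = v'))
      & (* step 5: degenerate iteration *)
        (eta k.+1 = eta k ->
           v k.+1 = Q_offset (fsig fa (sig k.+1)) (eta k) (v k))].

From mathcomp Require Import all_boot all_order all_algebra.
From mathcomp Require Import all_classical all_reals all_analysis.
From mathcomp Require Import lra.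
Import Order.TTheory GRing.Theory Num.Theory.
Import numFieldNormedType.Exports.

Set Implicit Arguments.
Unset Strict Implicit.
Unset Printing Implicit Defensive.

Local Open Scope ring_scope.
Local Open Scope classical_set_scope.

(* Every w^(j) is an invariant half-line of f^(sigma_j).  In a degenerate
   iteration this is because, along half-lines of slope eta, a polyhedral
   order-preserving additively homogeneous map g with an invariant half-line
   t eta + u acts as t |-> t + 1 composed with \bar g on offsets; \bar g is again
   order-preserving, additively homogeneous and fixes u, so its iterates from a
   super-invariant offset decrease to a fixed point, bounded below by u.
   The slope of an invariant half-line is the cycle time.  By the choice of
   sigma_(k+1), w^(k) is super-invariant for f^(sigma_(k+1)), since
   f^(sigma_(k+1))(w^(k)(t)) = f(w^(k)(t)) <= f^(sigma_k)(w^(k)(t)) = w^(k)(t+1),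
   and the orbits of f^(sigma_(k+1)) along w^(k+1) and along w^(k) stay at
   bounded distance, forcing the invariant slope to be the smaller one. *)

Section Vectors.
Variables (R : realType) (n : nat).
Implicit Types (x y eta : vec R n).

Definition vdist x y : R := \sum_i `|x i - y i|.

Lemma vdist_ge0 x y : 0 <= vdist x y.
Proof. by apply: sumr_ge0 => i _. Qed.

Lemma vle_vshift_vdist x y : vle x (vshift (vdist x y) y).
Proof.
move=> i; rewrite /vshift -lerBlDr; apply: le_trans (ler_norm _) _.
by rewrite /vdist (bigD1 i) //= lerDl; apply: sumr_ge0.
Qed.

Lemma vle_hl_vdist eta x y t : vle (hl eta x t) (vshift (vdist x y) (hl eta y t)).
Proof. by move=> i; have := vle_vshift_vdist x y i; rewrite /vshift /hl; lra. Qed.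

Lemma sum_hl (a eta x : vec R n) t :
  \sum_i a i * hl eta x t i = t * (\sum_i a i * eta i) + \sum_i a i * x i.
Proof.
rewrite mulr_sumr -big_split /=; apply: eq_bigr => i _.
by rewrite /hl mulrDr mulrCA.
Qed.

End Vectors.

Section Eventually.
Variable R : realType.

Lemma eventually_RE (P : R -> Prop) :
  eventually_R P <-> \forall t \near +oo, P t.
Proof.
split=> [[T HT]|[M [_ HM]]].
  by exists T; split; [exact: num_real | move=> t /ltW; apply: HT].
by exists (M + 1) => t Ht; apply: HM; apply: lt_le_trans Ht; rewrite ltrDl.
Qed.

Lemma near_pinfty_exists (A B : R -> Prop) :
  (\forall t \near +oo, A t) -> (\forall t \near +oo, B t) -> exists t, A t /\ B t.
Proof.
move=> HA HB.
have : \forall t \near +oo, A t /\ B t by near=> t; split; near: t.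
by move=> /(pinfty_ex_gt (@real0 _)) [t _ H]; exists t.
Unshelve. all: by end_near. Qed.

Lemma le_slope_near_pinfty (a e b : R) :
  (\forall t \near +oo, a * t <= e * t + b) -> a <= e.
Proof.
move=> H; rewrite leNgt; apply/negP => ea.
have : \forall t \near +oo, a * t <= e * t + b /\ b / (a - e) < t.
  by near=> t; split; [near: t | near: t; apply: nbhs_pinfty_gt; exact: num_real].
move=> /(pinfty_ex_gt (@real0 _)) [t _ [h1]].
have d0 : 0 < a - e by rewrite subr_gt0.
rewrite ltr_pdivrMr //; nra.
Unshelve. all: by end_near. Qed.

Lemma le_slope_nat (a e b : R) : (forall k : nat, a * k%:R <= e * k%:R + b) -> a <= e.
Proof.
move=> H; rewrite leNgt; apply/negP => ea.
have d0 : 0 < a - e by rewrite subr_gt0.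
have := archi_boundP (divr_ge0 (normr_ge0 b) (ltW d0)).
set k := Num.bound _; rewrite ltr_pdivrMr // => hk.
by have := H k; have := ler_norm b; nra.
Qed.

Lemma cvg_div_of_bounded_dev (a : nat -> R) (e B : R) :
  (forall k, `|a k - k%:R * e| <= B) -> (fun k => a k / k%:R) @ \oo --> e.
Proof.
move=> H; apply/cvgrPdist_le => eps eps0; near=> k.
have k0 : 0 < k%:R :> R by near: k; apply: nbhs_infty_gtr.
have -> : e - a k / k%:R = - ((a k - k%:R * e) / k%:R).
  by rewrite mulrBl mulrAC divff ?mul1r ?opprB // gt_eqF.
rewrite normrN normrM (gtr0_norm (_ : 0 < k%:R^-1)) ?invr_gt0 //.
rewrite -ler_pdivlMr ?invr_gt0 // invrK; apply: le_trans (H k) _.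
rewrite -ler_pdivrMl //; near: k; apply: nbhs_infty_ger.
Unshelve. all: by end_near. Qed.

End Eventually.

Section Polyhedral.
Variables (R : realType) (n : nat).

Lemma polyhedron_hl (P : set (vec R n)) (eta x : vec R n) : polyhedron P ->
  (\forall t \near +oo, P (hl eta x t)) \/ (\forall t \near +oo, ~ P (hl eta x t)).
Proof.
case=> q [a [b ->]] /=.
have [recess|] := boolP [forall k, \sum_i a k i * eta i <= 0].
  have [[t0 Ht0]|none] :=
    pselect (exists t0, forall k, \sum_i a k i * hl eta x t0 i <= b k).
    left; near=> t => k.
    have tt0 : t0 <= t by near: t; apply: nbhs_pinfty_ge; exact: num_real.
    have := Ht0 k; rewrite !sum_hl => h; apply: le_trans h.
    by have := forallP recess k; rewrite lerD2r; nra.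
  by right; near=> t => Ht; apply: none; exists t.
rewrite negb_forall => /existsP [k]; rewrite -ltNge => apos.
right; near=> t => Ht; have := Ht k; rewrite sum_hl.
have : (b k - \sum_i a k i * x i) / (\sum_i a k i * eta i) < t.
  by near: t; apply: nbhs_pinfty_gt; exact: num_real.
rewrite ltr_pdivrMr //; lra.
Unshelve. all: by end_near. Qed.

(* Each of the finitely many pieces either eventually contains the ray or
   eventually misses it, and the pieces cover R^n. *)
Lemma polyhedral_hl_affine (h : vec R n -> R) (eta x : vec R n) : polyhedral h ->
  exists a b, \forall t \near +oo, h (hl eta x t) = a * t + b.
Proof.
case=> p [P [c [d [HP Hcov Haff]]]].
have [[j Hj]|none] := pselect (exists j, \forall t \near +oo, P j (hl eta x t)).
  exists (\sum_i c j i * eta i), (\sum_i c j i * x i + d j).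
  apply: filterS Hj => t Pt.
  by rewrite (Haff j _ Pt) sum_hl addrA mulrC.
have : \forall t \near +oo, forall j, ~ P j (hl eta x t).
  apply: filter_forall => j.
  by case: (polyhedron_hl eta x (HP j)) => // hj; exfalso; apply: none; exists j.
move=> /(pinfty_ex_gt (@real0 _)) [t _ Ht].
by have [j Pj] := Hcov (hl eta x t); exfalso; exact: (Ht j).
Qed.

End Polyhedral.

Section Topical.
Variables (R : realType) (n : nat).
Implicit Types (g : vec R n -> vec R n) (x y u v eta : vec R n).

Definition topical g :=
  forall i, order_preserving (g^~ i) /\ add_homogeneous (g^~ i).

Definition superinvariant_hl g eta v :=
  eventually_R (fun t => vle (g (hl eta v t)) (hl eta v (t + 1))).

Lemma iter_invariant_hl g eta u T :
  (forall t, T <= t -> g (hl eta u t) = hl eta u (t + 1)) ->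
  forall k t, T <= t -> iter k g (hl eta u t) = hl eta u (t + k%:R).
Proof.
move=> H; elim=> [|k IH] t Ht /=; first by rewrite addr0.
rewrite IH // H; last by rewrite (le_trans Ht) // lerDl.
by rewrite -addrA -natr1.
Qed.

Variables (g : vec R n -> vec R n) (gT : topical g).

Lemma topical_le x y : vle x y -> vle (g x) (g y).
Proof. by move=> xy i; have [gm _] := gT i; exact: gm. Qed.

Lemma topical_shift c x y : vle x (vshift c y) -> vle (g x) (vshift c (g y)).
Proof.
move=> xy i; have [gm gh] := gT i.
by rewrite /vshift; have := gh c y => /= <-; exact: gm.
Qed.

Lemma iter_topical_shift c x y k :
  vle x (vshift c y) -> vle (iter k g x) (vshift c (iter k g y)).
Proof. by move=> xy; elim: k => [|k IH] //=; exact: topical_shift. Qed.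

Lemma iter_superinvariant_hl eta v T :
  (forall t, T <= t -> vle (g (hl eta v t)) (hl eta v (t + 1))) ->
  forall k t, T <= t -> vle (iter k g (hl eta v t)) (hl eta v (t + k%:R)).
Proof.
move=> H; elim=> [|k IH] t Ht /=; first by rewrite addr0.
move=> i; apply: le_trans (topical_le (IH t Ht) i) _.
have := H (t + k%:R); rewrite (le_trans Ht) ?lerDl // => /(_ isT i).
by rewrite -addrA -natr1.
Qed.

(* The orbit of 0 stays within bounded distance of the orbit of a point on
   the half-line, which moves by exactly eta at each step. *)
Lemma chi_invariant_hl eta u : invariant_hl g eta u -> chi g = eta.
Proof.
move=> [T HT]; set x0 := hl eta u T.
have orbit k : iter k g x0 = hl eta u (T + k%:R) by apply: (iter_invariant_hl HT).
apply/funext => i; apply: cvg_lim => //.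
apply: (@cvg_div_of_bounded_dev _ _ _
  (vdist (fun=> 0) x0 + vdist x0 (fun=> 0) + `|T * eta i + u i|)) => k.
have above := iter_topical_shift k (vle_vshift_vdist (fun=> 0) x0) i.
have below := iter_topical_shift k (vle_vshift_vdist x0 (fun=> 0)) i.
move: above below; rewrite /vshift !orbit /hl mulrDl.
have := vdist_ge0 0 x0; have := vdist_ge0 x0 0.
have := ler_norm (T * eta i + u i); have := ler_norm (- (T * eta i + u i)).
rewrite normrN ler_norml; lra.
Qed.

Lemma invariant_slope_le_superinvariant eta' u eta v :
  invariant_hl g eta' u -> superinvariant_hl g eta v -> vle eta' eta.
Proof.
move=> [T HT] [T' HT'] i; set x0 := hl eta' u T; set y0 := hl eta v T'.
have orbit k : iter k g x0 = hl eta' u (T + k%:R) by apply: (iter_invariant_hl HT).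
apply: (@le_slope_nat _ _ _ (vdist x0 y0 + T' * eta i + v i - T * eta' i - u i)).
move=> k; have := iter_topical_shift k (vle_vshift_vdist x0 y0) i.
have := iter_superinvariant_hl HT' k (lexx T') i.
rewrite /vshift orbit /hl !mulrDl; lra.
Qed.

End Topical.

Section PolyhedralTopical.
Variables (R : realType) (n : nat) (g : vec R n -> vec R n).
Hypotheses (gT : topical g) (gP : forall i, polyhedral (g^~ i)).
Variables (eta u : vec R n) (gu : invariant_hl g eta u).
Implicit Types (x y v : vec R n).

(* Along the ray, g is eventually affine; being within bounded distance of
   the invariant half-line, its slope must be eta. *)
Lemma hl_eventually_slope x i :
  exists b, \forall t \near +oo, g (hl eta x t) i = t * eta i + b.
Proof.
have [a [b Hab]] := polyhedral_hl_affine eta x (gP i).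
have near_u : \forall t \near +oo,
    a * t <= eta i * t + (vdist x u + eta i + u i - b) /\
    eta i * t <= a * t + (vdist u x + b - eta i - u i).
  near=> t.
  have ex : g (hl eta x t) i = a * t + b by near: t.
  have eu : g (hl eta u t) = hl eta u (t + 1) by near: t; apply/eventually_RE.
  have := topical_shift gT (vle_hl_vdist eta x u t) i.
  have := topical_shift gT (vle_hl_vdist eta u x t) i.
  by rewrite /vshift ex eu {1 2}/hl; split; lra.
exists b; apply: filterS Hab => t ->; congr (_ + _); rewrite mulrC; congr (_ * _).
apply/eqP; rewrite eq_le; apply/andP; split; apply: le_slope_near_pinfty.
  by apply: filterS near_u => s [h _]; exact: h.
by apply: filterS near_u => s [_ h]; exact: h.
Unshelve. all: by end_near. Qed.

Lemma ghat_invariant_hl : ghat g eta = eta.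
Proof.
apply/funext => i; have [b Hb] := hl_eventually_slope (fun=> 0) i.
apply: cvg_lim => //; apply/cvgrPdist_le => e e0; near=> t.
have t0 : 0 < t by near: t; apply: nbhs_pinfty_gt; exact: num_real.
have tb : `|b| / e <= t by near: t; apply: nbhs_pinfty_ge; exact: num_real.
have -> : (fun j => t * eta j) = hl eta (fun=> 0) t by apply/funext => j; rewrite /hl addr0.
have -> : g (hl eta (fun=> 0) t) i = t * eta i + b by near: t.
rewrite mulrDl mulrAC divff ?gt_eqF // mul1r opprD addrA subrr add0r normrN.
rewrite normrM (gtr0_norm (_ : 0 < t^-1)) ?invr_gt0 // ler_pdivrMr //.
by rewrite mulrC -ler_pdivrMr.
Unshelve. all: by end_near. Qed.

Lemma gbar_hl x :
  \forall t \near +oo, g (hl eta x t) = hl eta (gbar g eta x) (t + 1).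
Proof.
have : \forall t \near +oo,
    forall i, g (hl eta x t) i = hl eta (gbar g eta x) (t + 1) i.
  apply: filter_forall => i; have [b Hb] := hl_eventually_slope x i.
  have gbarE : gbar g eta x i = b - eta i.
    rewrite /gbar /ghat_eta ghat_invariant_hl; congr (_ - _).
    apply: lim_near_cst; first exact: Rhausdorff.
    near=> t; have -> : g (hl eta x t) i = t * eta i + b by near: t.
    by rewrite addrC addKr.
  by apply: filterS Hb => t ->; rewrite /hl gbarE; lra.
by apply: filterS => t H; apply/funext.
Unshelve. all: by end_near. Qed.

Lemma gbar_shift c x y :
  vle x (vshift c y) -> vle (gbar g eta x) (vshift c (gbar g eta y)).
Proof.
move=> xy i; have [t [ex ey]] := near_pinfty_exists (gbar_hl x) (gbar_hl y).
have xyt : vle (hl eta x t) (vshift c (hl eta y t)).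
  by move=> j; have := xy j; rewrite /vshift /hl; lra.
by have := topical_shift gT xyt i; rewrite ex ey /vshift /hl; lra.
Qed.

Lemma gbar_le x y : vle x y -> vle (gbar g eta x) (gbar g eta y).
Proof.
move=> xy i; have xy0 : vle x (vshift 0 y) by move=> j; rewrite /vshift add0r.
by have := gbar_shift xy0 i; rewrite /vshift add0r.
Qed.

Lemma gbar_invariant_hl : gbar g eta u = u.
Proof.
apply/funext => i.
have [t [eg eu]] := near_pinfty_exists (gbar_hl u) (proj1 (eventually_RE _) gu).
by have := congr1 (fun w => w i) (etrans (esym eg) eu); rewrite /hl; lra.
Qed.

Lemma gbar_superinvariant_hl v : superinvariant_hl g eta v -> vle (gbar g eta v) v.
Proof.
move=> /eventually_RE gv i; have [t [eg ev]] := near_pinfty_exists (gbar_hl v) gv.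
by have := ev i; rewrite eg /hl; lra.
Qed.

Section Q.
Variables (v : vec R n) (gv : superinvariant_hl g eta v).
Let G := gbar g eta.

Lemma iter_gbar_nonincreasing j : nonincreasing_seq (fun k => iter k G v j).
Proof.
apply/nonincreasing_seqP => k; move: j; elim: k => [|k IH].
  exact: gbar_superinvariant_hl.
exact: gbar_le IH.
Qed.

Lemma iter_gbar_lower_bound k : vle u (vshift (vdist u v) (iter k G v)).
Proof.
rewrite {1}(_ : u = iter k G u); last first.
  by elim: k => [|k IH] //=; rewrite -IH /G gbar_invariant_hl.
by elim: k => [|k IH] /=; [exact: vle_vshift_vdist | exact: gbar_shift].
Qed.

Lemma cvgn_iter_gbar j : cvgn (fun k => iter k G v j).
Proof.
apply: nonincreasing_is_cvgn; first exact: iter_gbar_nonincreasing.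
exists (u j - vdist u v) => _ [k _ <-].
by have := iter_gbar_lower_bound k j; rewrite /vshift; lra.
Qed.

Lemma Q_offset_le_iter k : vle (Q_offset g eta v) (iter k G v).
Proof.
by move=> j; apply: nonincreasing_cvgn_ge; [exact: iter_gbar_nonincreasing | exact: cvgn_iter_gbar].
Qed.

(* G is continuous in the sup-shift sense (gbar_shift), so the decreasing
   limit of its iterates is a fixed point. *)
Lemma gbar_Q_offset : G (Q_offset g eta v) = Q_offset g eta v.
Proof.
set L := Q_offset g eta v; apply/funext => i; apply/eqP; rewrite eq_le.
apply/andP; split.
  rewrite [X in _ <= X]/L /Q_offset; apply: limr_ge; first exact: cvgn_iter_gbar.
  near=> k; have k0 : (0 < k)%N by near: k; exact: nbhs_infty_gt.
  by rewrite -(prednK k0) /=; apply: gbar_le; apply: Q_offset_le_iter.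
apply/ler_addgt0Pl => e e0; near \oo => k.
have kL : vle (iter k G v) (vshift e L).
  have close : forall j, `|L j - iter k G v j| <= e.
    near: k; apply: filter_forall => j.
    by rewrite /L /Q_offset; move: (@cvgn_iter_gbar j) => /cvgrPdist_le; apply.
  by move=> j; have := close j; rewrite /vshift ler_norml => /andP [? ?]; lra.
have := gbar_shift kL i; rewrite /vshift => h; apply: le_trans h.
exact: (Q_offset_le_iter k.+1 i).
Unshelve. all: by end_near. Qed.

Lemma Q_offset_invariant_hl : invariant_hl g eta (Q_offset g eta v).
Proof.
apply/eventually_RE; apply: filterS (gbar_hl (Q_offset g eta v)) => t ->.
by rewrite -/G gbar_Q_offset.
Qed.

End Q.

End PolyhedralTopical.

Section Algorithm1.
Variables (R : realType) (n : nat) (m : 'I_n -> nat).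
Variable fa : forall i : 'I_n, 'I_(m i).+1 -> vec R n -> R.

Lemma fmin_le_fsig (s : strategy m) x : vle (fmin fa x) (fsig fa s x).
Proof. by move=> i; rewrite /fmin /fsig (bigD1 (s i)) //= ge_min lexx. Qed.

Lemma fsig_superinvariant_hl (s s' : strategy m) eta v :
  invariant_hl (fsig fa s) eta v ->
  eventually_R (fun t => fmin fa (hl eta v t) = fsig fa s' (hl eta v t)) ->
  superinvariant_hl (fsig fa s') eta v.
Proof.
move=> /eventually_RE inv /eventually_RE attained; apply/eventually_RE.
by apply: filterS2 inv attained => t <- <-; exact: fmin_le_fsig.
Qed.

Hypotheses (fT : forall s : strategy m, topical (fsig fa s))
  (fP : forall (s : strategy m) i, polyhedral ((fsig fa s)^~ i)).

Variables (sig : nat -> strategy m) (eta v : nat -> vec R n).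
Hypothesis run : alg1_run fa sig eta v.

Lemma alg1_invariant_hl k :
  (forall j, (j <= k)%N -> ~ invariant_hl (fmin fa) (eta j) (v j)) ->
  invariant_hl (fsig fa (sig k)) (eta k) (v k).
Proof.
case: run => inv0 step; elim: k => [|k IH] notfix //.
have notfix' j : (j <= k)%N -> ~ invariant_hl (fmin fa) (eta j) (v j).
  by move=> jk; apply: notfix; exact: leqW.
have [attained _ [v' [inv' v'E]] degenerate] := step k notfix'.
have [same|new] := eqVneq (eta k.+1) (eta k); last by rewrite v'E //; exact/eqP.
rewrite degenerate // same; rewrite same in inv'.
apply: (Q_offset_invariant_hl (fT _) (fP _) inv').
exact: fsig_superinvariant_hl (IH notfix') attained.
Qed.

End Algorithm1.

Theorem lemma4p2 (R : realType) (n : nat) (m : 'I_n -> nat)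
  (fa : forall i : 'I_n, 'I_(m i).+1 -> vec R n -> R)
  (Hpoly : forall i a, polyhedral (fa i a))
  (Hmono : forall i a, order_preserving (fa i a))
  (Hhom : forall i a, add_homogeneous (fa i a))
  (Hconv : forall i a, convex_fun (fa i a))
  (sig : nat -> strategy m) (eta v : nat -> vec R n) :
  alg1_run fa sig eta v ->
  forall k : nat,
    (forall j : nat, (j <= k)%N -> ~ invariant_hl (fmin fa) (eta j) (v j)) ->
    vle (chi (fsig fa (sig k.+1))) (chi (fsig fa (sig k))).
Proof.
move=> run k notfix.
have fT s : topical (fsig fa s) by move=> i; split; [exact: Hmono | exact: Hhom].
have fP s i : polyhedral ((fsig fa s)^~ i) by exact: Hpoly.
have inv_k := alg1_invariant_hl fT fP run notfix.
have [attained _ [v' [inv_k1 _]] _] := run.2 k notfix.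
have sup_k := fsig_superinvariant_hl inv_k attained.
rewrite (chi_invariant_hl (fT _) inv_k1) (chi_invariant_hl (fT _) inv_k).
exact (invariant_slope_le_superinvariant (fT _) inv_k1 sup_k).
Qed.
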